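(* For any integer $k\ge0$, code-tuple $F$, $i\in[F]$ and $\pmb{b}\in\mathcal{C}^{\ast}$: (i) $\mathcal{P}^k_{F,i}(\pmb{b})=\bar{\mathcal{P}}^k_{F,i}(\pmb{b})\cup\bigcup_{s\in\mathcal{S}_{F,i}(\pmb{b})}\mathcal{P}^k_{F,\tau_i(s)}$; (ii) if $F$ is $k$-bit delay decodable, then $|\mathcal{P}^k_{F,i}(\pmb{b})|=|\bar{\mathcal{P}}^k_{F,i}(\pmb{b})|+\sum_{s\in\mathcal{S}_{F,i}(\pmb{b})}|\mathcal{P}^k_{F,\tau_i(s)}|$; (iii) if $k\ge1$, then $\bar{\mathcal{P}}^k_{F,i}(\pmb{b})=0\mathcal{P}^{k-1}_{F,i}(\pmb{b}0)\cup 1\mathcal{P}^{k-1}_{F,i}(\pmb{b}1)$.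
   Context: $\mathcal{S}$ is a finite source alphabet with $|\mathcal{S}|\ge 2$ and $\mathcal{C}=\{0,1\}$. $\mathcal{A}^k,\mathcal{A}^{\ast},\mathcal{A}^{+}$ are the sequences over $\mathcal{A}$ of length $k$, finite length, finite positive length; $\lambda$ is the empty sequence. $\pmb{x}\preceq\pmb{y}$: $\pmb{x}$ is a prefix of $\pmb{y}$; $\pmb{x}\prec\pmb{y}$: proper prefix. For nonempty $\pmb{x}=x_1\cdots x_n$, $\mathrm{suff}(\pmb{x})=x_2\cdots x_n$. For $c\in\mathcal{C}$ and $\mathcal{A}\subseteq\mathcal{C}^{\ast}$, $c\mathcal{A}=\{c\pmb{a}:\pmb{a}\in\mathcal{A}\}$. A code-tuple $F$ with $m\ge1$ code tables is a tuple of maps $f_0,\dots,f_{m-1}:\mathcal{S}\to\mathcal{C}^{\ast}$ and $\tau_0,\dots,\tau_{m-1}:\mathcal{S}\to\{0,\dots,m-1\}$; $[F]=\{0,\dots,m-1\}$. Define $f_i^{\ast}(\lambda)=\lambda$ and $f_i^{\ast}(\pmb{x})=f_i(x_1)f^{\ast}_{\tau_i(x_1)}(\mathrm{suff}(\pmb{x}))$ for $\pmb{x}=x_1\cdots x_n\ne\lambda$. $\mathcal{S}_{F,i}(\pmb{b})=\{s:f_i(s)=\pmb{b}\}$. For integer $k\ge0$, $\mathcal{P}^k_{F,i}(\pmb{b})$ is the set of $\pmb{c}\in\mathcal{C}^k$ such that some $\pmb{x}=x_1\cdots x_n\in\mathcal{S}^{+}$ satisfies $f_i^{\ast}(\pmb{x})\succeq\pmb{b}\pmb{c}$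 and $f_i(x_1)\succeq\pmb{b}$; $\bar{\mathcal{P}}^k_{F,i}(\pmb{b})$ is the same with $f_i(x_1)\succ\pmb{b}$; $\mathcal{P}^k_{F,i}=\mathcal{P}^k_{F,i}(\lambda)$. $F$ is $k$-bit delay decodable if (i) $\mathcal{P}^k_{F,\tau_i(s)}\cap\bar{\mathcal{P}}^k_{F,i}(f_i(s))=\emptyset$ for all $i\in[F]$, $s\in\mathcal{S}$, and (ii) $\mathcal{P}^k_{F,\tau_i(s)}\cap\mathcal{P}^k_{F,\tau_i(s')}=\emptyset$ whenever $s\ne s'$ and $f_i(s)=f_i(s')$. *)

From HB Require Import structures.
From mathcomp Require Import all_boot.
From mathcomp Require Import boolp.
Set Implicit Arguments. Unset Strict Implicit. Unset Printing Implicit Defensive.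

(* Code alphabet C = {0,1} is rendered as bool (false = 0, true = 1). *)
Record codeTuple (S : finType) (m : nat) := CodeTuple {
  ct_f : 'I_m -> S -> seq bool;
  ct_tau : 'I_m -> S -> 'I_m }.

Section Defs.
Variables (S : finType) (m : nat) (F : codeTuple S m).

Fixpoint fstar (i : 'I_m) (x : seq S) : seq bool :=
  match x with
  | [::] => [::]
  | s :: x' => ct_f F i s ++ fstar (ct_tau F i s) x'
  end.

Definition Sset (i : 'I_m) (b : seq bool) : {set S} :=
  [set s | ct_f F i s == b].

(* P^k_{F,i}(b): x = s :: x' ranges over S^+ with x_1 = s *)
Definition Pset (k : nat) (i : 'I_m) (b : seq bool) : {set k.-tuple bool} :=
  [set c : k.-tuple bool | `[< exists (s : S) (x' : seq S),
      prefix (b ++ val c) (fstar i (s :: x')) && prefix b (ct_f F i s) >]].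

Definition Pbarset (k : nat) (i : 'I_m) (b : seq bool) : {set k.-tuple bool} :=
  [set c : k.-tuple bool | `[< exists (s : S) (x' : seq S),
      [&& prefix (b ++ val c) (fstar i (s :: x')),
          prefix b (ct_f F i s) & b != ct_f F i s] >]].

Definition P0set (k : nat) (i : 'I_m) : {set k.-tuple bool} := Pset k i [::].

Definition k_bit_delay_decodable (k : nat) : Prop :=
  (forall (i : 'I_m) (s : S),
      P0set k (ct_tau F i s) :&: Pbarset k i (ct_f F i s) = set0) /\
  (forall (i : 'I_m) (s s' : S), s != s' -> ct_f F i s = ct_f F i s' ->
      P0set k (ct_tau F i s) :&: P0set k (ct_tau F i s') = set0).

End Defs.

Definition consset (k : nat) (c : bool) (A : {set k.-tuple bool})
  : {set k.+1.-tuple bool} := [set cons_tuple c t | t in A].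

From HB Require Import structures.
From mathcomp Require Import all_boot.
From mathcomp Require Import boolp.

Set Implicit Arguments.
Unset Strict Implicit.
Unset Printing Implicit Defensive.

(* Split a witness [x = s :: x'] of [c \in P^k_{F,i}(b)] according to whether
   [f_i(s)] equals [b] or properly extends it.  If [f_i(s) = b], cancelling
   [b] leaves [c <= f^*_{tau_i(s)}(x')], i.e. [c \in P^k_{F,tau_i(s)}]; this
   gives (i), and (ii) is (i) read through the two disjointness conditions
   of k-bit delay decodability.  If [f_i(s)] properly extends [b], then
   [f_i(s)] also extends [b] followed by the first bit of [c], which gives
   (iii). *)

Lemma card_bigcup_disjoint (I T : finType) (A : {set I}) (F : I -> {set T}) :
  {in A &, forall i j, i != j -> [disjoint F i & F j]} ->
  #|\bigcup_(i in A) F i| = \sum_(i in A) #|F i|.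
Proof.
move=> disjF; pose G i := if i \in A then F i else set0.
have disjG i j : i != j -> [disjoint G i & G j].
  rewrite /G; case: ifP => iA; case: ifP => jA ij;
    try by rewrite -setI_eq0 ?set0I ?setI0.
  exact: disjF.
rewrite big_mkcond -sum1_card (partition_disjoint_bigcup _ _ disjG).
rewrite /= [RHS]big_mkcond; apply: eq_bigr => i _.
by rewrite sum1_card /G; case: ifP; rewrite ?cards0.
Qed.

Lemma prefix_rcons_proper (T : eqType) (b f r : seq T) x :
  prefix (rcons b x) (f ++ r) -> prefix (rcons b x) f = prefix b f && (b != f).
Proof.
rewrite -!cats1 => pre; apply/idP/andP => [pbf | [/prefixP[d fE] ne]].
- split; first exact: catl_prefix pbf.
  by apply/eqP => bf; move: (size_prefix pbf); rewrite -bf size_cat addn1 ltnn.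
- move: pre ne; rewrite {f}fE; case: d => [|y d]; first by rewrite cats0 eqxx.
  rewrite -catA !prefix_catr // eqxx /= => /andP[/eqP <- _] _.
  by rewrite eqxx prefix0s.
Qed.

Lemma mem_consset_cons k (c x : bool) (A : {set k.-tuple bool}) t :
  (cons_tuple x t \in consset c A) = (x == c) && (t \in A).
Proof.
apply/imsetP/andP => [[t' t'A /(congr1 val) [-> /val_inj ->]] | [/eqP -> tA]].
  by rewrite eqxx.
by exists t.
Qed.

Section PrefixSets.
Variables (S : finType) (m : nat) (F : codeTuple S m).

(* A witness [x = [::]] only admits the empty [c], which then needs some
   source symbol to be realised by a witness in [S^+]. *)
Lemma mem_P0set (S_inhabited : 0 < #|S|) k j (c : k.-tuple bool) :
  reflect (exists x, prefix c (fstar F j x)) (c \in P0set F k j).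
Proof.
rewrite inE; apply: (iffP (asboolP _)) => [[s [x /andP[pre _]]] | [[|s x] pre]].
- by exists (s :: x).
- have c0 : val c = [::] by apply/eqP; rewrite -prefixs0.
  by case/card_gt0P: S_inhabited => s _; exists s, [::]; rewrite /= c0 !prefix0s.
- by exists s, x; rewrite prefix0s andbT.
Qed.

Lemma Pset_split (S_inhabited : 0 < #|S|) k i b :
  Pset F k i b =
  Pbarset F k i b :|: \bigcup_(s in Sset F i b) P0set F k (ct_tau F i s).
Proof.
apply/setP => c; rewrite !inE; apply/asboolP/orP => [[s [x /andP[pre pbf]]] |].
  have [fsb | ne] := eqVneq b (ct_f F i s).
    right; apply/bigcupP; exists s; first by rewrite inE -fsb.
    apply/(mem_P0set S_inhabited); exists x.
    by move: pre; rewrite /= -fsb prefix_catr // eqxx.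
  by left; apply/asboolP; exists s, x; rewrite pre pbf ne.
case=> [/asboolP[s [x /and3P[pre pbf _]]] | /bigcupP[s]].
  by exists s, x; rewrite pre pbf.
rewrite inE => /eqP fsb /(mem_P0set S_inhabited)[x pre].
by exists s, x; rewrite /= fsb prefix_refl andbT prefix_catr // eqxx.
Qed.

Lemma card_Pset (S_inhabited : 0 < #|S|) k i b :
  k_bit_delay_decodable F k ->
  #|Pset F k i b| =
  #|Pbarset F k i b| + \sum_(s in Sset F i b) #|P0set F k (ct_tau F i s)|.
Proof.
case=> disj_bar disj_tau; rewrite Pset_split // -card_bigcup_disjoint.
  apply/eqP; rewrite (leq_card_setU _ _).2.
  apply: bigcup_disjoint => s; rewrite inE => /eqP fsb.
  by rewrite -setI_eq0 setIC -fsb disj_bar.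
move=> s s'; rewrite !inE => /eqP fsb /eqP fs'b ne.
by rewrite -setI_eq0 disj_tau // fsb fs'b.
Qed.

Lemma mem_Pbarset_cons k i b x (c : k.-tuple bool) :
  (cons_tuple x c \in Pbarset F k.+1 i b) = (c \in Pset F k i (rcons b x)).
Proof.
rewrite !inE /= -cat_rcons; apply/asboolP/asboolP => -[s [w]] /=.
  case/and3P => pre pbf ne; exists s, w.
  by rewrite pre (prefix_rcons_proper (catl_prefix pre)) pbf ne.
case/andP => pre pbx; exists s, w.
by rewrite pre -(prefix_rcons_proper (catl_prefix pre)).
Qed.

Lemma Pbarset_succ k i b :
  Pbarset F k.+1 i b =
  consset false (Pset F k i (rcons b false))
    :|: consset true (Pset F k i (rcons b true)).
Proof.
apply/setP => /tupleP[x c].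
by rewrite mem_Pbarset_cons in_setU !mem_consset_cons; case: x; rewrite ?orbF.
Qed.

End PrefixSets.

Theorem lemma3 (S : finType) (m : nat) (HS : 1 < #|S|)
    (F : codeTuple S m) (i : 'I_m) (b : seq bool) :
  (* (i) *)
  (forall k : nat,
     Pset F k i b =
     Pbarset F k i b :|: \bigcup_(s in Sset F i b) P0set F k (ct_tau F i s)) /\
  (* (ii) *)
  (forall k : nat, k_bit_delay_decodable F k ->
     #|Pset F k i b| =
     #|Pbarset F k i b| + \sum_(s in Sset F i b) #|P0set F k (ct_tau F i s)|) /\
  (* (iii), for k = k'.+1 >= 1, with k - 1 = k' *)
  (forall k' : nat,
     Pbarset F k'.+1 i b =
     consset false (Pset F k' i (rcons b false))
       :|: consset true (Pset F k' i (rcons b true))).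
Proof.
have S_inhabited : 0 < #|S| by exact: ltnW.
split; first by move=> k; exact: Pset_split.
split; first by move=> k; exact: card_Pset.
by move=> k'; exact: Pbarset_succ.
Qed.
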